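(* In $\varepsilon\tau(\mathbf{C})$ (classical logic), for every derivation $\pi$ and every critical $\varepsilon\tau$-term $e$ of $\pi$ there is a complete $e$-elimination set.
   Context: $\mathbf{C}$ is classical propositional logic. $\varepsilon\tau$-terms: $\varepsilon x\,A(x)$, $\tau x\,A(x)$. Critical formulas: $A(t)\to A(\varepsilon x\,A(x))$ (belonging to its critical term $\varepsilon x\,A(x)$) and $A(\tau x\,A(x))\to A(t)$ (belonging to $\tau x\,A(x)$). A derivation $\pi$ of $D$ in $\varepsilon\tau(\mathbf{L})$ is a derivation in the quantifier-free language with $\varepsilon\tau$-terms from a finite set of critical formulas using substitution instances of theorems of $\mathbf{L}$ and modus ponens; $e$ is a critical $\varepsilon\tau$-term of $\pi$ if some critical formula used in $\pi$ belongs to $e$. Write the critical formulas of $\pi$ as $\Gamma\cup\Lambda(e)$, $\Lambda(e)$ all those belonging to $e$, and the end formula as $D(e)$; $\Gamma[s/e]$, $D(s)$ denote replacement of every occurrence of $e$ by $s$. $\{s_1,\dots,s_k\}$ is a complete $e$-elimination set for $\pi$ if $\Gamma[s_1/e],\dots,\Gamma[s_k/e]\vdash_{\mathbf{L}}D(s_1)\lor\dots\lor D(s_k)$ (derivability from these assumptions by substitution instances of theorems of $\mathbf{L}$ and modus ponens; the assumptions need not be critical formulas). *)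

From Stdlib Require List.
From mathcomp Require Import all_boot.
Set Implicit Arguments.
Unset Strict Implicit.
Unset Printing Implicit Defensive.

(* TVar n is the variable with de Bruijn index n; TEps A / TTau A bind      *)
(* index 0 in A (i.e. TEps A is  eps x A(x)).  Function and predicate       *)
Inductive term : Type :=
| TVar : nat -> term
| TFun : nat -> list term -> term
| TEps : form -> term
| TTau : form -> term
with form : Type :=
| FAtom : nat -> list term -> form
| FBot : form
| FAnd : form -> form -> form
| FOr  : form -> form -> form
| FImp : form -> form -> form.

Fixpoint teqb (t u : term) {struct t} : bool :=
  match t, u with
  | TVar n, TVar m => n == m
  | TFun f ts, TFun g us =>
      (f == g) &&
      (fix leqb (ts us : list term) {struct ts} : bool :=
         match ts, us with
         | nil, nil => true
         | a :: ts', b :: us' => teqb a b && leqb ts' us'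
         | _, _ => false
         end) ts us
  | TEps A, TEps B => feqb A B
  | TTau A, TTau B => feqb A B
  | _, _ => false
  end
with feqb (A B : form) {struct A} : bool :=
  match A, B with
  | FAtom p ts, FAtom q us =>
      (p == q) &&
      (fix leqb (ts us : list term) {struct ts} : bool :=
         match ts, us with
         | nil, nil => true
         | a :: ts', b :: us' => teqb a b && leqb ts' us'
         | _, _ => false
         end) ts us
  | FBot, FBot => true
  | FAnd A1 A2, FAnd B1 B2 => feqb A1 B1 && feqb A2 B2
  | FOr A1 A2, FOr B1 B2 => feqb A1 B1 && feqb A2 B2
  | FImp A1 A2, FImp B1 B2 => feqb A1 B1 && feqb A2 B2
  | _, _ => false
  end.

Fixpoint tlift (c : nat) (t : term) {struct t} : term :=
  match t with
  | TVar n => TVar (if c <= n then n.+1 else n)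
  | TFun f ts => TFun f (map (tlift c) ts)
  | TEps A => TEps (flift c.+1 A)
  | TTau A => TTau (flift c.+1 A)
  end
with flift (c : nat) (A : form) {struct A} : form :=
  match A with
  | FAtom p ts => FAtom p (map (tlift c) ts)
  | FBot => FBot
  | FAnd A1 A2 => FAnd (flift c A1) (flift c A2)
  | FOr A1 A2 => FOr (flift c A1) (flift c A2)
  | FImp A1 A2 => FImp (flift c A1) (flift c A2)
  end.

(* capture-avoiding substitution of u for index c (removing that index) *)
Fixpoint tsubst (c : nat) (u : term) (t : term) {struct t} : term :=
  match t with
  | TVar n => if n == c then u else if c < n then TVar n.-1 else TVar n
  | TFun f ts => TFun f (map (tsubst c u) ts)
  | TEps A => TEps (fsubst c.+1 (tlift 0 u) A)
  | TTau A => TTau (fsubst c.+1 (tlift 0 u) A)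
  end
with fsubst (c : nat) (u : term) (A : form) {struct A} : form :=
  match A with
  | FAtom p ts => FAtom p (map (tsubst c u) ts)
  | FBot => FBot
  | FAnd A1 A2 => FAnd (fsubst c u A1) (fsubst c u A2)
  | FOr A1 A2 => FOr (fsubst c u A1) (fsubst c u A2)
  | FImp A1 A2 => FImp (fsubst c u A1) (fsubst c u A2)
  end.

(* A(t), for A the body of  eps x A(x)  (bound variable = index 0) *)
Definition inst (A : form) (t : term) : form := fsubst 0 t A.

(* replacement of every occurrence of e by s (occurrences under a binder
   are the shifted copies of e, and s is shifted accordingly) *)
Fixpoint trepl (e s : term) (t : term) {struct t} : term :=
  if teqb t e then s else
  match t with
  | TVar n => TVar n
  | TFun f ts => TFun f (map (trepl e s) ts)
  | TEps A => TEps (frepl (tlift 0 e) (tlift 0 s) A)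
  | TTau A => TTau (frepl (tlift 0 e) (tlift 0 s) A)
  end
with frepl (e s : term) (A : form) {struct A} : form :=
  match A with
  | FAtom p ts => FAtom p (map (trepl e s) ts)
  | FBot => FBot
  | FAnd A1 A2 => FAnd (frepl e s A1) (frepl e s A2)
  | FOr A1 A2 => FOr (frepl e s A1) (frepl e s A2)
  | FImp A1 A2 => FImp (frepl e s A1) (frepl e s A2)
  end.

Inductive pform : Type :=
| PVar : nat -> pform
| PBot : pform
| PAnd : pform -> pform -> pform
| POr  : pform -> pform -> pform
| PImp : pform -> pform -> pform.

Fixpoint peval (v : nat -> bool) (P : pform) : bool :=
  match P with
  | PVar n => v n
  | PBot => false
  | PAnd P1 P2 => peval v P1 && peval v P2
  | POr P1 P2 => peval v P1 || peval v P2
  | PImp P1 P2 => peval v P1 ==> peval v P2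
  end.

(* theorems of classical propositional logic C = the tautologies *)
Definition C_theorem (P : pform) : Prop := forall v, peval v P.

Fixpoint psubst (sigma : nat -> form) (P : pform) : form :=
  match P with
  | PVar n => sigma n
  | PBot => FBot
  | PAnd P1 P2 => FAnd (psubst sigma P1) (psubst sigma P2)
  | POr P1 P2 => FOr (psubst sigma P1) (psubst sigma P2)
  | PImp P1 P2 => FImp (psubst sigma P1) (psubst sigma P2)
  end.

Definition L_instance (L : pform -> Prop) (phi : form) : Prop :=
  exists P sigma, L P /\ psubst sigma P = phi.

Inductive rule : Type :=
| RHyp : rule
| RAx  : rule
| RMP  : nat -> nat -> rule.

Definition justified (L : pform -> Prop) (Hyp : form -> Prop)
  (prev : seq form) (phi : form) (r : rule) : Prop :=
  match r with
  | RHyp => Hyp phi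
  | RAx => L_instance L phi
  | RMP i j => i < size prev /\ j < size prev /\
               nth FBot prev j = FImp (nth FBot prev i) phi
  end.

Fixpoint valid_from (L : pform -> Prop) (Hyp : form -> Prop)
  (prev : seq form) (pi : seq (form * rule)) : Prop :=
  match pi with
  | nil => True
  | (phi, r) :: rest => justified L Hyp prev phi r /\
                        valid_from L Hyp (rcons prev phi) rest
  end.

Definition derivation (L : pform -> Prop) (Hyp : form -> Prop)
  (pi : seq (form * rule)) (D : form) : Prop :=
  pi <> nil /\ valid_from L Hyp nil pi /\ last FBot (map fst pi) = D.

Definition derivable (L : pform -> Prop) (Hyp : form -> Prop) (D : form) : Prop :=
  exists pi, derivation L Hyp pi D.

Definition belongs (phi : form) (e : term) : Prop :=
  (exists A t, e = TEps A /\ phi = FImp (inst A t) (inst A e)) \/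
  (exists A t, e = TTau A /\ phi = FImp (inst A e) (inst A t)).

Definition critical (phi : form) : Prop := exists e, belongs phi e.

Definition et_derivation (L : pform -> Prop) (pi : seq (form * rule)) (D : form) :=
  derivation L critical pi D.

Definition used_crit (pi : seq (form * rule)) (phi : form) : Prop :=
  List.In (phi, RHyp) pi.

Definition critical_term_of (pi : seq (form * rule)) (e : term) : Prop :=
  exists phi, used_crit pi phi /\ belongs phi e.

Definition Gamma (pi : seq (form * rule)) (e : term) (phi : form) : Prop :=
  used_crit pi phi /\ ~ belongs phi e.

Fixpoint bigOr (l : seq form) : form :=
  match l with
  | nil => FBot
  | [:: A] => A
  | A :: l' => FOr A (bigOr l')
  end.

Definition complete_elim_set (L : pform -> Prop) (pi : seq (form * rule))
  (D : form) (e : term) (ss : seq term) : Prop :=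
  ss <> nil /\
  derivable L
    (fun phi => exists s psi, List.In s ss /\ Gamma pi e psi /\ phi = frepl e s psi)
    (bigOr (map (fun s => frepl e s D) ss)).

(* Fix a valuation [w] of the atoms. If [w] satisfies all critical formulas of
   [e], soundness gives [D(e)]. Otherwise some critical formula of [e] fails, say
   [A(t) -> A(eps x A)] with [A(t)] true; replacing [e] by [t] turns every
   critical formula of [e] into one with consequent [A(t)], hence true (dually
   for tau, where the antecedent becomes the false [A(t)]). Replacement commutes
   with the connectives, so soundness under [w] composed with [[t/e]] gives [D(t)].
   Thus [e] together with the witnesses of the critical formulas of [e] is a
   complete elimination set: [Gamma[s/e]] entails the disjunction of the [D(s)]
   semantically, and classical propositional logic is complete. The one syntactic
   fact needed is [A(e)[t/e] = A(t)], which holds because [e] is too large to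
   occur in [A]. *)

From mathcomp Require Import all_boot.
From Stdlib Require Import Classical.
From mathcomp Require Import zify.

Set Implicit Arguments.
Unset Strict Implicit.

Section TermFormInd.
Variables (P : term -> Prop) (Q : form -> Prop).
Hypotheses
  (hVar : forall n, P (TVar n))
  (hFun : forall f ts, List.Forall P ts -> P (TFun f ts))
  (hEps : forall A, Q A -> P (TEps A))
  (hTau : forall A, Q A -> P (TTau A))
  (hAtom : forall p ts, List.Forall P ts -> Q (FAtom p ts))
  (hBot : Q FBot)
  (hAnd : forall A B, Q A -> Q B -> Q (FAnd A B))
  (hOr : forall A B, Q A -> Q B -> Q (FOr A B))
  (hImp : forall A B, Q A -> Q B -> Q (FImp A B)).

Fixpoint term_ind' (t : term) : P t :=
  match t with
  | TVar n => hVar n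
  | TFun f ts => hFun f ((fix go l : List.Forall P l :=
      if l is x :: l' then List.Forall_cons _ (term_ind' x) (go l') else List.Forall_nil _) ts)
  | TEps A => hEps (form_ind' A)
  | TTau A => hTau (form_ind' A)
  end
with form_ind' (A : form) : Q A :=
  match A with
  | FAtom p ts => hAtom p ((fix go l : List.Forall P l :=
      if l is x :: l' then List.Forall_cons _ (term_ind' x) (go l') else List.Forall_nil _) ts)
  | FBot => hBot
  | FAnd A1 A2 => hAnd (form_ind' A1) (form_ind' A2)
  | FOr A1 A2 => hOr (form_ind' A1) (form_ind' A2)
  | FImp A1 A2 => hImp (form_ind' A1) (form_ind' A2)
  end.

Lemma term_form_ind : (forall t, P t) /\ (forall A, Q A).
Proof. exact: (conj term_ind' form_ind'). Qed.

End TermFormInd.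

Lemma map_Forall_eq (T U : Type) (f g : T -> U) (l : seq T) :
  List.Forall (fun x => f x = g x) l -> map f l = map g l.
Proof. by elim=> //= x l' -> _ ->. Qed.

Section ListEqb.
Variable eqb : term -> term -> bool.
Fixpoint list_eqb (ts us : seq term) : bool :=
  match ts, us with
  | nil, nil => true
  | t :: ts', u :: us' => eqb t u && list_eqb ts' us'
  | _, _ => false
  end.
End ListEqb.

Lemma list_eqb_spec ts :
  List.Forall (fun t => forall u, teqb t u <-> t = u) ts ->
  forall us, list_eqb teqb ts us <-> ts = us.
Proof.
elim=> [|t ts' Ht _ IH] [|u us] //=.
split=> [/andP[/Ht -> /IH ->] // | [<- <-]].
by apply/andP; split; [apply/Ht | apply/IH].
Qed.

Lemma eqb_spec :
  (forall t u, teqb t u <-> t = u) /\ (forall A B, feqb A B <-> A = B).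
Proof.
apply: term_form_ind.
- by move=> n [m|||] //=; split=> [/eqP -> | [->]].
- move=> f ts Hts [|g us||] //; rewrite -[teqb _ _]/((f == g) && list_eqb teqb ts us).
  by split=> [/andP[/eqP -> /(list_eqb_spec Hts) ->] // | [<- <-]];
    rewrite eqxx /=; apply/(list_eqb_spec Hts).
- by move=> A IH [||B|B] //=; split=> [/IH -> // | [<-]]; apply/IH.
- by move=> A IH [||B|B] //=; split=> [/IH -> // | [<-]]; apply/IH.
- move=> p ts Hts [q us||||] //; rewrite -[feqb _ _]/((p == q) && list_eqb teqb ts us).
  by split=> [/andP[/eqP -> /(list_eqb_spec Hts) ->] // | [<- <-]];
    rewrite eqxx /=; apply/(list_eqb_spec Hts).
- by case.
- by move=> A B HA HB [||A' B'||] //=;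
    split=> [/andP[/HA -> /HB ->] // | [<- <-]]; apply/andP; split; [apply/HA | apply/HB].
- by move=> A B HA HB [|||A' B'|] //=;
    split=> [/andP[/HA -> /HB ->] // | [<- <-]]; apply/andP; split; [apply/HA | apply/HB].
- by move=> A B HA HB [||||A' B'] //=;
    split=> [/andP[/HA -> /HB ->] // | [<- <-]]; apply/andP; split; [apply/HA | apply/HB].
Qed.

Lemma teqbP t u : reflect (t = u) (teqb t u).
Proof. by apply: (iffP idP) => /(proj1 eqb_spec t u). Qed.

Lemma feqbP A B : reflect (A = B) (feqb A B).
Proof. by apply: (iffP idP) => /(proj2 eqb_spec A B). Qed.

Lemma trepl_unfold e s t : trepl e s t =
  if teqb t e then s else
  match t with
  | TVar n => TVar n
  | TFun f ts => TFun f (map (trepl e s) ts)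
  | TEps A => TEps (frepl (tlift 0 e) (tlift 0 s) A)
  | TTau A => TTau (frepl (tlift 0 e) (tlift 0 s) A)
  end.
Proof. by case: t. Qed.

Lemma map_Forall_id (T : Type) (f : T -> T) (l : seq T) :
  List.Forall (fun x => f x = x) l -> map f l = l.
Proof. by move=> H; rewrite -[RHS]map_id; apply: map_Forall_eq. Qed.

Lemma repl_self : (forall t e, trepl e e t = t) /\ (forall A e, frepl e e A = A).
Proof.
apply: term_form_ind => [n|f ts IH|A IH|A IH|p ts IH||A B IHA IHB|A B IHA IHB|A B IHA IHB] e;
  rewrite ?trepl_unfold; try case: teqbP => [-> //|_]; rewrite /= ?IH ?IHA ?IHB //;
  by rewrite map_Forall_id //; apply: List.Forall_impl IH => t ->.
Qed.

Lemma frepl_self e A : frepl e e A = A.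
Proof. exact: (proj2 repl_self). Qed.

Fixpoint tsize (t : term) : nat :=
  match t with
  | TVar _ => 1
  | TFun _ ts => (sumn (map tsize ts)).+1
  | TEps A | TTau A => (fsize A).+1
  end
with fsize (A : form) : nat :=
  match A with
  | FAtom _ ts => (sumn (map tsize ts)).+1
  | FBot => 1
  | FAnd A1 A2 | FOr A1 A2 | FImp A1 A2 => (fsize A1 + fsize A2).+1
  end.

Lemma size_lift :
  (forall t c, tsize (tlift c t) = tsize t) /\ (forall A c, fsize (flift c A) = fsize A).
Proof.
apply: term_form_ind => [n|f ts IH|A IH|A IH|p ts IH||A B IHA IHB|A B IHA IHB|A B IHA IHB] c //=;
  rewrite ?IH ?IHA ?IHB // -map_comp; congr (sumn _).+1;
  by apply: map_Forall_eq; apply: List.Forall_impl IH => t /= ->.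
Qed.

Lemma tsize_tlift t c : tsize (tlift c t) = tsize t.
Proof. exact: (proj1 size_lift). Qed.

Lemma sumn_map_eq_or_ge (T : Type) (f g : T -> nat) k (l : seq T) :
  List.Forall (fun x => f x = g x \/ k <= f x) l ->
  sumn (map f l) = sumn (map g l) \/ k <= sumn (map f l).
Proof. by elim=> [|x l' Hx _ IH] /=; [left | case: Hx; case: IH; lia]. Qed.

Lemma size_subst :
  (forall t c u, tsize (tsubst c u t) = tsize t \/ tsize u <= tsize (tsubst c u t)) /\
  (forall A c u, fsize (fsubst c u A) = fsize A \/ tsize u <= fsize (fsubst c u A)).
Proof.
apply: term_form_ind => [n|f ts IH|A IH|A IH|p ts IH||A B IHA IHB|A B IHA IHB|A B IHA IHB] c u /=.
2,5: rewrite -map_comp; have [->|] := @sumn_map_eq_or_ge _ (tsize \o tsubst c u) tsize (tsize u) _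
       (List.Forall_impl _ (fun t Ht => Ht c u) IH); by [left | right; lia].
- by case: eqP => _; [right | case: ifP; left].
1,2: by have := IH c.+1 (tlift 0 u); rewrite tsize_tlift; lia.
- by left.
all: by have := IHA c u; have := IHB c u; lia.
Qed.

Definition is_epstau (t : term) : bool :=
  match t with TEps _ | TTau _ => true | _ => false end.

Lemma tsubst_eq_var X c u :
  is_epstau u -> tsize X < tsize u -> tsubst c u X = u -> X = TVar c.
Proof.
case: X => [n|f ts|B|B] /=.
- by move=> Hu _; case: eqP => [-> //|_]; case: ifP => _ Eu; rewrite -Eu in Hu.
- by move=> Hu _ Eu; rewrite -Eu in Hu.
all: move=> _ Hsz Eu; exfalso.
all: have Hu : tsize u = (fsize (fsubst c.+1 (tlift 0 u) B)).+1 by rewrite -{1}Eu.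
all: by have := (proj2 size_subst) B c.+1 (tlift 0 u); rewrite tsize_tlift; lia.
Qed.

Lemma Forall_tsize_lt (P : term -> Prop) k ts :
  List.Forall P ts -> sumn (map tsize ts) < k ->
  List.Forall (fun t => P t /\ tsize t < k) ts.
Proof. by elim=> [|t ts' Ht _ IH] /= Hk; constructor; [split=> //; lia | apply: IH; lia]. Qed.

(* The size bound ensures that [u] does not already occur in [X]. *)
Lemma repl_subst :
  (forall X c u s, is_epstau u -> tsize X < tsize u ->
     trepl u s (tsubst c u X) = tsubst c s X) /\
  (forall B c u s, is_epstau u -> fsize B < tsize u ->
     frepl u s (fsubst c u B) = fsubst c s B).
Proof.
apply: term_form_ind => [n|f ts IH|B IH|B IH|p ts IH||A B IHA IHB|A B IHA IHB|A B IHA IHB]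
  c u s Hu Hsz; rewrite ?trepl_unfold.
- case: (teqbP (tsubst c u (TVar n)) u) => [/(tsubst_eq_var Hu Hsz) [->]|] /=.
    by rewrite eqxx.
  by case: eqP => // _ _; case: ifP.
- case: teqbP => [/(tsubst_eq_var Hu Hsz) //|_] /=.
  rewrite -map_comp; congr TFun; apply: map_Forall_eq.
  by apply: List.Forall_impl (Forall_tsize_lt IH (ltnW Hsz)) => t [Ht Htsz]; apply: Ht.
1,2: case: teqbP => [/(tsubst_eq_var Hu Hsz) //|_] /=;
  by rewrite IH //; [case: u Hu {Hsz} | rewrite tsize_tlift; move: Hsz => /=; lia].
- rewrite /= -map_comp; congr FAtom; apply: map_Forall_eq.
  by apply: List.Forall_impl (Forall_tsize_lt IH (ltnW Hsz)) => t [Ht Htsz]; apply: Ht.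
- by [].
all: by rewrite /= ?IHA ?IHB //=; move: Hsz => /=; lia.
Qed.

Lemma frepl_inst A e s :
  is_epstau e -> fsize A < tsize e -> frepl e s (inst A e) = inst A s.
Proof. exact: (proj2 repl_subst). Qed.

Fixpoint fval (w : form -> bool) (A : form) : bool :=
  match A with
  | FAtom p ts => w (FAtom p ts)
  | FBot => false
  | FAnd A1 A2 => fval w A1 && fval w A2
  | FOr A1 A2 => fval w A1 || fval w A2
  | FImp A1 A2 => fval w A1 ==> fval w A2
  end.

Lemma fval_psubst w sigma P : fval w (psubst sigma P) = peval (fval w \o sigma) P.
Proof. by elim: P => //= P1 -> P2 ->. Qed.

Lemma fval_frepl w e s A : fval w (frepl e s A) = fval (fval w \o frepl e s) A.
Proof. by elim: A => //= A1 -> A2 ->. Qed.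

Lemma fval_bigOr w l A : List.In A l -> fval w A -> fval w (bigOr l).
Proof.
elim: l => [|B [|C l] IH] //=; first by case=> // <-.
by case=> [<- -> //|HA HwA]; rewrite (IH HA HwA) orbT.
Qed.

Lemma In_nth (T : Type) (x0 : T) (l : seq T) n : n < size l -> List.In (nth x0 l n) l.
Proof. by elim: l n => [|x l IH] [|n] //= Hn; [left | right; apply: IH]. Qed.

Lemma In_last (T : Type) (x0 : T) (l : seq T) : l <> nil -> List.In (last x0 l) l.
Proof.
elim: l x0 => [|x [|y l] IH] x0 //= _; first by left.
by right; apply: IH.
Qed.

Lemma valid_from_sound w Hyp pi prev :
  valid_from C_theorem Hyp prev pi ->
  (forall A, List.In A prev -> fval w A) ->
  (forall A, List.In (A, RHyp) pi -> fval w A) ->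
  forall A, List.In A (map fst pi) -> fval w A.
Proof.
elim: pi prev => [|[A r] pi IH] prev //= [HA Hpi] Hprev Hhyp.
have HwA : fval w A.
  case: r HA Hhyp => /= [_ -> //|[P [sigma [HP <-]]] _|i j [Hi [Hj Eij]] _]; first by left.
    by rewrite fval_psubst.
  by move: (Hprev _ (In_nth FBot Hj)); rewrite Eij /= => /implyP; apply; apply/Hprev/In_nth.
move=> B [<- //|HB]; apply: (IH _ Hpi _ _ B HB) => [C|C HC]; last by apply: Hhyp; right.
by rewrite -cats1 List.in_app_iff => [[/Hprev // | [<- // | []]]].
Qed.

Lemma derivation_sound w Hyp pi D :
  derivation C_theorem Hyp pi D ->
  (forall A, List.In (A, RHyp) pi -> fval w A) -> fval w D.
Proof.
move=> [pi_nil [Hpi <-]] Hhyp; apply: valid_from_sound Hpi _ Hhyp _ _ => //.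
by apply: In_last; case: pi pi_nil.
Qed.

Fixpoint atoms (A : form) : seq form :=
  match A with
  | FAtom p ts => [:: FAtom p ts]
  | FBot => [::]
  | FAnd A1 A2 | FOr A1 A2 | FImp A1 A2 => atoms A1 ++ atoms A2
  end.

Fixpoint atom_index (a : form) (l : seq form) : nat :=
  if l is b :: l' then if feqb a b then 0 else (atom_index a l').+1 else 0.

Lemma nth_atom_index a l : List.In a l -> nth FBot l (atom_index a l) = a.
Proof.
elim: l => [|b l IH] //= Hal.
by case: feqbP => [-> //|ne]; apply: IH; case: Hal => // Eba; case: ne.
Qed.

Fixpoint skeleton (l : seq form) (A : form) : pform :=
  match A with
  | FAtom p ts => PVar (atom_index (FAtom p ts) l)
  | FBot => PBot
  | FAnd A1 A2 => PAnd (skeleton l A1) (skeleton l A2)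
  | FOr A1 A2 => POr (skeleton l A1) (skeleton l A2)
  | FImp A1 A2 => PImp (skeleton l A1) (skeleton l A2)
  end.

Lemma psubst_skeleton l A :
  (forall a, List.In a (atoms A) -> List.In a l) -> psubst (nth FBot l) (skeleton l A) = A.
Proof.
elim: A => [p ts||A1 IH1 A2 IH2|A1 IH1 A2 IH2|A1 IH1 A2 IH2] //= Hl;
  first by rewrite nth_atom_index //; apply: Hl; left.
all: by rewrite IH1 ?IH2 // => a Ha; apply: Hl; rewrite List.in_app_iff; tauto.
Qed.

Lemma peval_skeleton v l A : peval v (skeleton l A) = fval (fun a => v (atom_index a l)) A.
Proof. by elim: A => //= A1 -> A2 ->. Qed.

Lemma valid_C_instance A : (forall w, fval w A) -> L_instance C_theorem A.
Proof.
move=> HA; exists (skeleton (atoms A) A), (nth FBot (atoms A)).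
by split=> [v|]; [rewrite peval_skeleton | exact: psubst_skeleton].
Qed.

Definition imps (hs : seq form) (G : form) : form := foldr FImp G hs.

Lemma fval_imps w hs G :
  ((forall h, List.In h hs -> fval w h) -> fval w G) -> fval w (imps hs G).
Proof.
elim: hs => [|h hs IH] /= H; first by apply: H.
by apply/implyP => Hh; apply: IH => Hhs; apply: H => x [<- //|]; apply: Hhs.
Qed.

Lemma valid_from_mp_chain Hyp hs G prev i :
  i < size prev -> nth FBot prev i = imps hs G -> (forall h, List.In h hs -> Hyp h) ->
  exists rest, valid_from C_theorem Hyp prev rest /\ last (imps hs G) (map fst rest) = G.
Proof.
elim: hs prev i => [|h hs IH] prev i Hi Ei Hhs; first by exists nil.
have [|||rest [Hrest Hlast]] := IH (rcons (rcons prev h) (imps hs G)) (size prev).+1.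
- by rewrite !size_rcons.
- by rewrite nth_rcons !size_rcons ltnn eqxx.
- by move=> x Hx; apply: Hhs; right.
exists ((h, RHyp) :: (imps hs G, RMP (size prev) i) :: rest); split=> //=.
split; first by apply: Hhs; left.
split=> //; rewrite !size_rcons !nth_rcons Hi ltnn eqxx Ei ltnS leqnn.
by split=> //; split=> //; apply: ltnW.
Qed.

Lemma entails_derivable (Hyp : form -> Prop) hs G :
  (forall h, List.In h hs -> Hyp h) ->
  (forall w, (forall h, List.In h hs -> fval w h) -> fval w G) ->
  derivable C_theorem Hyp G.
Proof.
move=> Hhs HG.
have [rest [Hrest Hlast]] := @valid_from_mp_chain Hyp hs G [:: imps hs G] 0 erefl erefl Hhs.
exists ((imps hs G, RAx) :: rest); split=> //; split=> //=.
by split=> //; apply: valid_C_instance => w; apply: fval_imps; apply: HG.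
Qed.

Lemma exists_filter_list (T : Type) (P : T -> Prop) (l : seq T) :
  exists l', forall x, List.In x l' <-> List.In x l /\ P x.
Proof.
elim: l => [|x l [l' IH]]; first by exists nil => y; split=> [|[]].
case: (classic (P x)) => [Px|nPx]; [exists (x :: l') | exists l'] => y /=; rewrite IH.
  by split=> [[<-|[]]|[[<-|]]]; auto.
by split=> [[]|[[<-|]]]; auto.
Qed.

Lemma exists_choice_list (T U : Type) (P : T -> Prop) (R : T -> U -> Prop) (l : seq T) :
  (forall x, P x -> exists y, R x y) ->
  exists ys, forall x, List.In x l -> P x -> exists y, List.In y ys /\ R x y.
Proof.
move=> HR; elim: l => [|x l [ys IH]]; first by exists nil.
case: (classic (P x)) => [/HR [y Rxy]|nPx].
  by exists (y :: ys) => z /= [<- _|Hz Pz]; [exists y; auto | have [y' []] := IH z Hz Pz; eauto].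
by exists ys => z /= [<- /nPx []|]; apply: IH.
Qed.

Definition crit_form (e t : term) : form :=
  match e with
  | TEps A => FImp (inst A t) (inst A e)
  | TTau A => FImp (inst A e) (inst A t)
  | _ => FBot
  end.

Lemma belongs_crit_form phi e : belongs phi e -> is_epstau e /\ exists t, phi = crit_form e t.
Proof. by case=> [[A [t [-> ->]]]|[A [t [-> ->]]]]; split=> //; exists t. Qed.

Lemma crit_form_repl_counterexample w e t t' :
  is_epstau e -> ~~ fval w (crit_form e t) -> fval w (frepl e t (crit_form e t')).
Proof.
case: e => // A _ /=; rewrite frepl_inst //.
- by case: (fval w (inst A t)) => //; rewrite implybT.
- by case: (fval w (inst A t)); rewrite ?implybT.
Qed.

Lemma used_crit_In pi phi : used_crit pi phi -> List.In phi (map fst pi).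
Proof. exact: List.in_map fst pi (phi, RHyp). Qed.

Lemma elim_set_entails pi D e ts w :
  et_derivation C_theorem pi D ->
  (forall phi, used_crit pi phi -> belongs phi e ->
     exists t, List.In t ts /\ phi = crit_form e t) ->
  (forall s psi, List.In s (e :: ts) -> Gamma pi e psi -> fval w (frepl e s psi)) ->
  exists2 s, List.In s (e :: ts) & fval w (frepl e s D).
Proof.
move=> HD Hts HGamma.
have sound_at s : List.In s (e :: ts) ->
    (forall phi, used_crit pi phi -> belongs phi e -> fval w (frepl e s phi)) ->
    fval w (frepl e s D).
  move=> Hs HLambda; rewrite fval_frepl; apply: derivation_sound HD _ => phi Hphi.
  rewrite /= -fval_frepl; case: (classic (belongs phi e)) => [|nb]; first exact: HLambda.
  by apply: HGamma.
case: (classic (exists phi, [/\ used_crit pi phi, belongs phi e & ~~ fval w phi]))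
  => [[phi [Hphi Hb Hn]] | Hnone].
  have [t [Ht Et]] := Hts phi Hphi Hb.
  have [He _] := belongs_crit_form Hb.
  exists t; first by right.
  apply: sound_at => [|psi _ /belongs_crit_form [_ [t' ->]]]; first by right.
  by apply: crit_form_repl_counterexample; rewrite -?Et.
exists e; first by left.
apply: sound_at => [|phi Hphi Hb]; first by left.
by rewrite frepl_self; apply: contraT => Hn; case: Hnone; exists phi.
Qed.

Theorem mainTheorem12 :
  forall (pi : seq (form * rule)) (D : form),
    et_derivation C_theorem pi D ->
    forall e : term, critical_term_of pi e ->
    exists ss : seq term, complete_elim_set C_theorem pi D e ss.
Proof.
(* The construction works for any [e]; if [e] is not critical, no formula of [pi] belongs to it. *)
move=> pi D HD e _.
have [gl Hgl] := exists_filter_list (Gamma pi e) (map fst pi).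
have [ts Hts] := @exists_choice_list _ _ (belongs^~ e) (fun phi t => phi = crit_form e t)
  (map fst pi) (fun phi Hphi => (belongs_crit_form Hphi).2).
exists (e :: ts); split=> //.
apply: (@entails_derivable _ (List.flat_map (fun s => map (frepl e s) gl) (e :: ts))).
  move=> _ /List.in_flat_map [s [Hs /List.in_map_iff [psi [<- Hpsi]]]].
  by exists s, psi; split=> //; split=> //; case/Hgl: Hpsi.
move=> w Hw.
have [|s Hs HDs] := elim_set_entails (w := w) HD (fun phi Hphi => Hts phi (used_crit_In Hphi)).
  move=> s psi Hs Hpsi; apply: Hw; apply/List.in_flat_map; exists s; split=> //.
  by apply: List.in_map; apply/Hgl; split=> //; exact: used_crit_In Hpsi.1.
by apply: (fval_bigOr _ HDs); exact: (List.in_map (fun s => frepl e s D) _ _ Hs).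
Qed.
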